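(* Let $\mathbf Q\in\mathbb R^{m\times d}$ with rows $\mathbf q_i$, $\mathbf K\in\mathbb R^{n\times d}$ with rows $\mathbf k_l$, $\beta>0$, $h(\mathbf x,\mathbf y)=\exp(\beta\langle\mathbf x,\mathbf y\rangle)$, and $\mathbf A=h(\mathbf Q,\mathbf K)$. Let $\mathcal S\subseteq[n]$ with $|\mathcal S|=r$ and $\mathbf K_{\mathcal S}=(\mathbf k_l)_{l\in\mathcal S}$. Then $\widehat{\mathbf A}\defeq h(\mathbf Q,\mathbf K_{\mathcal S})\,h(\mathbf K_{\mathcal S},\mathbf K_{\mathcal S})^{+}\,h(\mathbf K_{\mathcal S},\mathbf K)$ has rank at most $r$ and, with $R_{\mathbf Q}\defeq\|\mathbf Q\|_{2,\infty}$, $$\|\mathbf A-\widehat{\mathbf A}\|_{2,\infty}^2\le\exp(\beta R_{\mathbf Q}^2)\,\|h_{\mathrm{res}}(\mathbf K,\mathbf K)\|_2,$$ where $h_{\mathrm{res}}(\mathbf K,\mathbf K)\defeq h(\mathbf K,\mathbf K)-h(\mathbf K,\mathbf K_{\mathcal S})h(\mathbf K_{\mathcal S},\mathbf K_{\mathcal S})^{+}h(\mathbf K_{\mathcal S},\mathbf K)$.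
   Context: For ordered tuples of vectors $\mathbf X=(\mathbf x_i)_{i}$, $\mathbf Y=(\mathbf y_l)_{l}$, $h(\mathbf X,\mathbf Y)$ denotes the matrix $(h(\mathbf x_i,\mathbf y_l))_{i,l}$. $\mathbf M^{+}$ is the Moore–Penrose pseudo-inverse, $\|\cdot\|_2$ the spectral norm, and $\|\mathbf M\|_{2,\infty}$ the maximal Euclidean norm of a row of $\mathbf M$. *)

From HB Require Import structures.
From mathcomp Require Import all_boot all_order all_algebra.
From mathcomp Require Import all_classical all_reals all_analysis.
Set Implicit Arguments. Unset Strict Implicit. Unset Printing Implicit Defensive.
Import Order.TTheory GRing.Theory Num.Theory.
Local Open Scope ring_scope.
Local Open Scope classical_set_scope.

Section Defs.
Variable R : realType.

Definition hmat (beta : R) (p q d : nat) (X : 'M[R]_(p, d)) (Y : 'M[R]_(q, d))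
  : 'M[R]_(p, q) :=
  \matrix_(i < p, l < q) expR (beta * \sum_(k < d) X i k * Y l k).

Definition vnorm (q : nat) (x : 'cV[R]_q) : R := Num.sqrt (\sum_(j < q) x j 0 ^+ 2).

Definition norm2inf (p q : nat) (M : 'M[R]_(p, q)) : R :=
  \big[Num.max/0]_(i < p) Num.sqrt (\sum_(j < q) M i j ^+ 2).

Definition specnorm (p q : nat) (M : 'M[R]_(p, q)) : R :=
  sup [set vnorm (M *m x) | x in [set x : 'cV[R]_q | vnorm x = 1]].

Definition penrose (p q : nat) (A : 'M[R]_(p, q)) (X : 'M[R]_(q, p)) : Prop :=
  [/\ A *m X *m A = A, X *m A *m X = X,
      (A *m X)^T = A *m X & (X *m A)^T = X *m A].

Definition mpinv (p q : nat) (A : 'M[R]_(p, q)) : 'M[R]_(q, p) :=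
  xget 0 [set X | penrose A X].

(* K_S : rows of K indexed by S, in the (increasing) enumeration order of S *)
Definition subrows (n d : nat) (K : 'M[R]_(n, d)) (S : {set 'I_n})
  : 'M[R]_(#|S|, d) := \matrix_(i < #|S|, j < d) K (enum_val i) j.

End Defs.

From HB Require Import structures.
From mathcomp Require Import all_boot all_order all_algebra.
From mathcomp Require Import all_classical all_reals all_analysis.
From mathcomp Require Import ring.
Import Order.TTheory GRing.Theory Num.Theory.
Local Open Scope ring_scope.
Set Implicit Arguments. Unset Strict Implicit. Unset Printing Implicit Defensive.

(* The exponential kernel is positive semidefinite: its Taylor series is a
   nonnegative combination of entrywise powers of a Gram matrix, which are
   themselves Gram matrices (of tensor powers).  Fix a query q, and let
   G = h(K_S, K_S) and P = G^+.  The kernel matrix of the points (K_S, q, K)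
   is positive semidefinite, hence so is its generalized Schur complement with
   respect to G; this complement is the residual block matrix
   [[alpha, a], [a^T, h_res(K, K)]], where a is the row of A - Ahat belonging
   to q and alpha = h(q, q) - h(q, K_S) P h(K_S, q) <= exp(beta |q|^2).
   A discriminant argument on this block matrix gives
   |a|^2 <= alpha ||h_res(K, K)||_2. *)

Section QuadraticInequalities.
Variable R : realFieldType.

Lemma discr_le_of_quadratic_ge0 (a b c : R) : 0 <= a ->
  (forall t, 0 <= a * t ^+ 2 + 2 * b * t + c) -> b ^+ 2 <= a * c.
Proof.
move=> a_ge0 quad_ge0; have [a0|a_neq0] := eqVneq a 0.
  rewrite {}a0 in quad_ge0 *.
  have [->|b_neq0] := eqVneq b 0; first by rewrite expr0n mul0r.
  have := quad_ge0 (- (c + 1) / (2 * b)).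
  have -> : 0 * (- (c + 1) / (2 * b)) ^+ 2 + 2 * b * (- (c + 1) / (2 * b)) + c = -1.
    by field.
  by rewrite ler0N1.
have a_gt0 : 0 < a by rewrite lt_def a_neq0.
have := quad_ge0 (- b / a).
have -> : a * (- b / a) ^+ 2 + 2 * b * (- b / a) + c = (a * c - b ^+ 2) / a by field.
by rewrite pmulr_lge0 ?invr_gt0 // subr_ge0.
Qed.

Lemma sum_mul_sqr_le n (x y : 'I_n -> R) :
  (\sum_j x j * y j) ^+ 2 <= (\sum_j x j ^+ 2) * (\sum_j y j ^+ 2).
Proof.
apply: discr_le_of_quadratic_ge0 => [|t]; first by apply: sumr_ge0 => j _; rewrite sqr_ge0.
have -> : (\sum_j x j ^+ 2) * t ^+ 2 + 2 * (\sum_j x j * y j) * t + \sum_j y j ^+ 2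
  = \sum_j (t * x j + y j) ^+ 2.
  rewrite mulr_suml big_distrr /= mulr_suml -!big_split /=.
  by apply: eq_bigr => j _; ring.
by apply: sumr_ge0 => j _; rewrite sqr_ge0.
Qed.

End QuadraticInequalities.

Section PositiveSemidefinite.
Variable R : realFieldType.

Definition psdmx n (M : 'M[R]_n) := forall x : 'cV[R]_n, 0 <= (x^T *m M *m x) 0 0.

Lemma qform_sum n (M : 'M[R]_n) (x : 'cV[R]_n) :
  (x^T *m M *m x) 0 0 = \sum_i \sum_j x i 0 * x j 0 * M i j.
Proof.
rewrite !mxE exchange_big /=; apply: eq_bigr => i _.
by rewrite !mxE mulr_suml; apply: eq_bigr => j _; rewrite !mxE; ring.
Qed.

Lemma qform_block m1 m2 (A : 'M[R]_m1) B C (D : 'M[R]_m2) (u : 'cV_m1) (v : 'cV_m2) :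
  (col_mx u v)^T *m block_mx A B C D *m col_mx u v =
    u^T *m A *m u + v^T *m C *m u + (u^T *m B *m v + v^T *m D *m v).
Proof. by rewrite tr_col_mx mul_row_block mul_row_col !mulmxDl. Qed.

(* [P] need only be a symmetric reflexive generalized inverse of [G], e.g. its
   Moore-Penrose pseudo-inverse. *)
Lemma psd_schur_complement r p (G : 'M[R]_r) (B : 'M[R]_(r, p)) (C : 'M[R]_p) P :
  P^T = P -> P *m G *m P = P -> psdmx (block_mx G B B^T C) ->
  psdmx (C - B^T *m P *m B).
Proof.
move=> P_sym PGP blk_psd y; have := blk_psd (col_mx (- (P *m B *m y)) y).
have trPBy : (- (P *m B *m y))^T = - (y^T *m B^T *m P).
  by rewrite linearN /= !trmx_mul P_sym mulmxA.
rewrite qform_block trPBy !mulmxN !mulNmx !opprK !mulmxA.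
have PGP_r k (M : 'M[R]_(k, r)) : M *m P *m G *m P = M *m P.
  by rewrite -!mulmxA (mulmxA P G P) PGP.
by rewrite PGP_r addrN add0r addrC mulmxBr mulmxBl !mulmxA.
Qed.

End PositiveSemidefinite.

Section ExponentialKernel.
Variable R : realType.

Lemma psd_gram_pow N d (Z : 'M[R]_(N, d)) p :
  psdmx (\matrix_(i, j) (\sum_k Z i k * Z j k) ^+ p).
Proof.
move=> c; rewrite qform_sum.
(* Expanding the power makes each entry a sum over all [f : 'I_p -> 'I_d]
   of products of the tensor-power coordinates [\prod_t Z _ (f t)]. *)
have pow_expand i j : (\sum_k Z i k * Z j k) ^+ p =
    \sum_(f : {ffun 'I_p -> 'I_d}) (\prod_t Z i (f t)) * (\prod_t Z j (f t)).
  rewrite -[p in LHS]card_ord -prodr_const bigA_distr_bigA.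
  by apply: eq_bigr => f _; rewrite big_split.
have -> : \sum_i \sum_j c i 0 * c j 0 * (\matrix_(i, j) (\sum_k Z i k * Z j k) ^+ p) i j
    = \sum_(f : {ffun 'I_p -> 'I_d}) (\sum_i c i 0 * \prod_t Z i (f t)) ^+ 2.
  symmetry; under eq_bigr => f _ do rewrite expr2 mulr_suml.
  under eq_bigr => f _ do under eq_bigr => i _ do rewrite mulr_sumr.
  rewrite exchange_big; apply: eq_bigr => i _; rewrite exchange_big; apply: eq_bigr => j _.
  by rewrite mxE pow_expand mulr_sumr; apply: eq_bigr => f _; ring.
by apply: sumr_ge0 => f _; rewrite sqr_ge0.
Qed.

Lemma psd_hmat (beta : R) N d (Z : 'M[R]_(N, d)) : 0 <= beta -> psdmx (hmat beta Z Z).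
Proof.
move=> beta_ge0 c; rewrite qform_sum.
set x := fun i j => beta * \sum_k Z i k * Z j k.
set qpow := fun k => (c^T *m (\matrix_(i, j) (\sum_l Z i l * Z j l) ^+ k) *m c) 0 0.
have partial_sumE n : \sum_i \sum_j c i 0 * c j 0 * series (exp_coeff (x i j)) n =
    \sum_(0 <= k < n) (beta ^+ k / k`!%:R) * qpow k.
  rewrite /series /=.
  under eq_bigr => i _ do under eq_bigr => j _ do rewrite mulr_sumr.
  under eq_bigr => i _ do rewrite exchange_big /=.
  rewrite exchange_big /=; apply: eq_bigr => k _.
  rewrite /qpow qform_sum mulr_sumr; apply: eq_bigr => i _.
  rewrite mulr_sumr; apply: eq_bigr => j _.
  by rewrite /exp_coeff /x mxE /= exprMn; ring.
have partial_sum_cvg : ((fun n => \sum_i \sum_j c i 0 * c j 0 * series (exp_coeff (x i j)) n)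
    @ \oo --> \sum_i \sum_j c i 0 * c j 0 * hmat beta Z Z i j)%classic.
  apply: (cvg_big add_continuous) => // i _; apply: (cvg_big add_continuous) => // j _.
  by rewrite mxE; apply: cvgMl_tmp; exact: is_cvg_series_exp_coeff.
apply: (cvgr_to_ge partial_sum_cvg); apply: nearW => n; rewrite partial_sumE.
apply: sumr_ge0 => k _; apply: mulr_ge0; last exact: psd_gram_pow.
by rewrite divr_ge0 // exprn_ge0.
Qed.

End ExponentialKernel.

Section KernelMatrices.
Variables (R : realType) (beta : R).

Lemma tr_hmat p q d (X : 'M[R]_(p, d)) (Y : 'M[R]_(q, d)) :
  (hmat beta X Y)^T = hmat beta Y X.
Proof.
apply/matrixP => i j; rewrite !mxE; congr (expR (_ * _)).
by apply: eq_bigr => k _; rewrite mulrC.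
Qed.

Lemma row_hmat p q d (X : 'M[R]_(p, d)) (Y : 'M[R]_(q, d)) i :
  row i (hmat beta X Y) = hmat beta (row i X) Y.
Proof.
by apply/matrixP => a j; rewrite !mxE; congr (expR (_ * _)); apply: eq_bigr => k _; rewrite !mxE.
Qed.

Lemma hmat_col_mxl p1 p2 q d (X1 : 'M[R]_(p1, d)) (X2 : 'M[R]_(p2, d)) (Y : 'M[R]_(q, d)) :
  hmat beta (col_mx X1 X2) Y = col_mx (hmat beta X1 Y) (hmat beta X2 Y).
Proof.
apply/matrixP => i j; case: (split_ordP i) => k ->;
  rewrite ?col_mxEu ?col_mxEd !mxE; congr (expR (_ * _));
  by apply: eq_bigr => l _; rewrite ?col_mxEu ?col_mxEd.
Qed.

Lemma hmat_col_mxr p q1 q2 d (X : 'M[R]_(p, d)) (Y1 : 'M[R]_(q1, d)) (Y2 : 'M[R]_(q2, d)) :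
  hmat beta X (col_mx Y1 Y2) = row_mx (hmat beta X Y1) (hmat beta X Y2).
Proof. by rewrite -[LHS]trmxK tr_hmat hmat_col_mxl tr_col_mx !tr_hmat. Qed.

Lemma hmat_col_mx p1 p2 d (X1 : 'M[R]_(p1, d)) (X2 : 'M[R]_(p2, d)) :
  hmat beta (col_mx X1 X2) (col_mx X1 X2) =
  block_mx (hmat beta X1 X1) (hmat beta X1 X2) (hmat beta X2 X1) (hmat beta X2 X2).
Proof. by rewrite hmat_col_mxl !hmat_col_mxr block_mxEv. Qed.

End KernelMatrices.

Section PseudoInverse.
Variable R : realType.

Lemma penrose_uniq p q (A : 'M[R]_(p, q)) X Y : penrose A X -> penrose A Y -> X = Y.
Proof.
case=> AXA XAX AX_sym XA_sym [AYA YAY AY_sym YA_sym].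
have X_XAY : X = X *m A *m Y.
  rewrite -{1}XAX -mulmxA -AX_sym.
  have -> : A *m X = A *m Y *m (A *m X) by rewrite mulmxA AYA.
  by rewrite trmx_mul AX_sym AY_sym !mulmxA XAX.
have YA_XAYA : Y *m A = X *m A *m (Y *m A).
  transitivity ((Y *m A *m (X *m A))^T); first by rewrite -mulmxA (mulmxA A X A) AXA YA_sym.
  by rewrite trmx_mul XA_sym YA_sym.
have Y_XAY : Y = X *m A *m Y by rewrite -{1}YAY YA_XAYA -mulmxA YAY.
by rewrite X_XAY -Y_XAY.
Qed.

(* When no solution of the Penrose equations exists, [mpinv] is [0], which
   satisfies both lemmas below as well. *)
Lemma mpinv_mulmxK p q (A : 'M[R]_(p, q)) : mpinv A *m A *m mpinv A = mpinv A.
Proof. by rewrite /mpinv; case: xgetP => [X _ []|_]; rewrite ?mulmx0. Qed.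

Lemma trmx_mpinv_sym r (G : 'M[R]_r) : G^T = G -> (mpinv G)^T = mpinv G.
Proof.
rewrite /mpinv => G_sym; case: xgetP => [X _ XP|_]; last exact: trmx0.
apply: (penrose_uniq _ XP); case: XP => GXG XGX GX_sym XG_sym; split.
- by have := congr1 trmx GXG; rewrite !trmx_mul G_sym mulmxA.
- by have := congr1 trmx XGX; rewrite !trmx_mul G_sym mulmxA.
- by rewrite trmx_mul trmxK G_sym -XG_sym trmx_mul G_sym.
- by rewrite trmx_mul trmxK G_sym -GX_sym trmx_mul G_sym.
Qed.

End PseudoInverse.

Section SpectralNorm.
Variable R : realType.
Local Open Scope classical_set_scope.

Lemma sqr_vnorm q (x : 'cV[R]_q) : vnorm x ^+ 2 = \sum_j x j 0 ^+ 2.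
Proof. by rewrite sqr_sqrtr // sumr_ge0 // => j _; rewrite sqr_ge0. Qed.

Lemma vnormZ q (a : R) (x : 'cV[R]_q) : vnorm (a *: x) = `|a| * vnorm x.
Proof.
rewrite /vnorm; under eq_bigr => j _ do rewrite mxE exprMn.
by rewrite -mulr_sumr sqrtrM ?sqr_ge0 // sqrtr_sqr.
Qed.

Lemma vnorm_eq0 q (x : 'cV[R]_q) : vnorm x = 0 -> x = 0.
Proof.
move=> /eqP; rewrite sqrtr_eq0 => sum_le0; apply/matrixP => i j; rewrite ord1 mxE.
have sum_eq0 : \sum_j x j 0 ^+ 2 = 0.
  by apply/eqP; rewrite eq_le sum_le0 sumr_ge0 // => k _; rewrite sqr_ge0.
by apply/eqP; rewrite -sqrf_eq0; apply/eqP/(psumr_eq0P _ sum_eq0) => // k _; rewrite sqr_ge0.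
Qed.

Lemma dot_le_vnorm q (u w : 'cV[R]_q) : (u^T *m w) 0 0 <= vnorm u * vnorm w.
Proof.
rewrite mxE; under eq_bigr => j _ do rewrite mxE.
rewrite (le_trans (ler_norm _)) // -sqrtr_sqr -sqrtrM; last by rewrite -sqr_vnorm sqr_ge0.
by rewrite ler_sqrt ?mulr_ge0 -?sqr_vnorm ?sqr_ge0 // !sqr_vnorm sum_mul_sqr_le.
Qed.

Lemma vnorm_le_specnorm p q (H : 'M[R]_(p, q)) (x : 'cV[R]_q) :
  vnorm x = 1 -> vnorm (H *m x) <= specnorm H.
Proof.
move=> x_unit; apply: ub_le_sup; last by exists x.
exists (Num.sqrt (\sum_i \sum_j H i j ^+ 2)) => y [z z_unit <-].
have z_sum : \sum_j z j 0 ^+ 2 = 1 by rewrite -sqr_vnorm z_unit expr1n.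
rewrite /vnorm ler_sqrt; last by do 2![apply: sumr_ge0 => ? _]; rewrite sqr_ge0.
apply: ler_sum => i _; rewrite mxE.
by rewrite (le_trans (sum_mul_sqr_le (fun j => H i j) (fun j => z j 0))) // z_sum mulr1.
Qed.

Lemma specnorm_ge0 p q (H : 'M[R]_(p, q)) : 0 <= specnorm H.
Proof.
have [[x x_unit]|no_unit] := pselect (exists x : 'cV[R]_q, vnorm x = 1).
  exact: le_trans (sqrtr_ge0 _) (vnorm_le_specnorm H x_unit).
rewrite /specnorm (_ : [set _ | x in _] = set0) ?sup0 //.
by apply/seteqP; split => // y [x x_unit _]; apply: no_unit; exists x.
Qed.

Lemma vnorm_mulmx_le p q (H : 'M[R]_(p, q)) (x : 'cV[R]_q) :
  vnorm (H *m x) <= specnorm H * vnorm x.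
Proof.
have [/vnorm_eq0 ->|nx_neq0] := eqVneq (vnorm x) 0.
  have vnorm0 k : vnorm (0 : 'cV[R]_k) = 0.
    by rewrite /vnorm big1 ?sqrtr0 // => j _; rewrite mxE expr0n.
  by rewrite mulmx0 !vnorm0 mulr0.
have nx_gt0 : 0 < vnorm x by rewrite lt_def nx_neq0 sqrtr_ge0.
set u := (vnorm x)^-1 *: x.
have u_unit : vnorm u = 1 by rewrite vnormZ ger0_norm ?invr_ge0 ?(ltW nx_gt0) ?mulVf.
have -> : H *m x = vnorm x *: (H *m u) by rewrite scalemxAr scalerA mulfV ?scale1r.
by rewrite vnormZ ger0_norm ?(ltW nx_gt0) // mulrC ler_pM2r // vnorm_le_specnorm.
Qed.

Lemma qform_le_specnorm n (H : 'M[R]_n) (v : 'cV[R]_n) :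
  (v^T *m H *m v) 0 0 <= vnorm v ^+ 2 * specnorm H.
Proof.
rewrite -mulmxA (le_trans (dot_le_vnorm _ _)) // expr2 -mulrA.
by rewrite ler_wpM2l ?sqrtr_ge0 // mulrC vnorm_mulmx_le.
Qed.

(* The discriminant of the quadratic form at [(t, a)], nonnegative in [t],
   gives [|a|^4 <= alpha * a H a^T <= alpha * |a|^2 * ||H||_2]. *)
Lemma psd_block_row_bound n (alpha : 'M[R]_1) (a : 'M[R]_(1, n)) (H : 'M[R]_n) :
  psdmx (block_mx alpha a a^T H) -> \sum_j a 0 j ^+ 2 <= alpha 0 0 * specnorm H.
Proof.
move=> blk_psd; set N := \sum_j a 0 j ^+ 2.
have N_sqr : vnorm a^T ^+ 2 = N by rewrite sqr_vnorm; apply: eq_bigr => j _; rewrite mxE.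
have aaT : (a *m a^T) 0 0 = N by rewrite mxE; apply: eq_bigr => j _; rewrite mxE expr2.
set Qa := (a *m H *m a^T) 0 0.
have quad_ge0 t : 0 <= alpha 0 0 * t ^+ 2 + 2 * N * t + Qa.
  have := blk_psd (col_mx t%:M a^T).
  rewrite qform_block tr_scalar_mx trmxK !mul_mx_scalar !mul_scalar_mx -!scalemxAl.
  rewrite {1}[alpha]mx11_scalar [a *m a^T]mx11_scalar [a *m H *m a^T]mx11_scalar.
  rewrite !scale_scalar_mx -!raddfD /= mxE eqxx mulr1n aaT -/Qa.
  suff -> : t * (t * alpha 0 0) + t * N + (t * N + Qa) = alpha 0 0 * t ^+ 2 + 2 * N * t + Qa by [].
  by ring.
have alpha_ge0 : 0 <= alpha 0 0.
  have := blk_psd (col_mx 1%:M 0); rewrite qform_block !trmx0 !mulmx0 !mul0mx !addr0.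
  by rewrite tr_scalar_mx mul_mx_scalar mul_scalar_mx !mxE /= !mul1r.
have N_discr := discr_le_of_quadratic_ge0 alpha_ge0 quad_ge0.
have Qa_le : Qa <= N * specnorm H by have := qform_le_specnorm H a^T; rewrite trmxK N_sqr.
have sH_ge0 := specnorm_ge0 H.
have N_ge0 : 0 <= N by apply: sumr_ge0 => j _; rewrite sqr_ge0.
have [->|N_neq0] := eqVneq N 0; first by rewrite mulr_ge0.
have N_gt0 : 0 < N by rewrite lt_def N_neq0 N_ge0.
have : N ^+ 2 <= alpha 0 0 * (N * specnorm H) by rewrite (le_trans N_discr) // ler_wpM2l.
by rewrite expr2 mulrCA ler_pM2l.
Qed.

End SpectralNorm.

Section RowNorm.
Variable R : realType.

Lemma norm2inf_ge0 p q (M : 'M[R]_(p, q)) : 0 <= norm2inf M.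
Proof. by rewrite /norm2inf; elim/big_ind: _ => // x y; rewrite le_max => ->. Qed.

Lemma sum_sqr_row_le_norm2inf p q (M : 'M[R]_(p, q)) i :
  \sum_j M i j ^+ 2 <= norm2inf M ^+ 2.
Proof.
have row_ge0 : 0 <= \sum_j M i j ^+ 2 by apply: sumr_ge0 => j _; rewrite sqr_ge0.
rewrite -(sqr_sqrtr row_ge0) lerXn2r ?nnegrE ?sqrtr_ge0 ?norm2inf_ge0 //.
exact: (le_bigmax 0 (fun i => Num.sqrt (\sum_j M i j ^+ 2)) i).
Qed.

Lemma norm2inf_sqr_le p q (M : 'M[R]_(p, q)) (c : R) :
  0 <= c -> (forall i, \sum_j M i j ^+ 2 <= c) -> norm2inf M ^+ 2 <= c.
Proof.
move=> c_ge0 rows_le; rewrite -(sqr_sqrtr c_ge0) lerXn2r ?nnegrE ?sqrtr_ge0 ?norm2inf_ge0 //.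
by apply: bigmax_le => [|i _]; rewrite ?sqrtr_ge0 // ler_sqrt.
Qed.

End RowNorm.

Section NystromResidual.
Variables (R : realType) (beta : R) (s d : nat) (L : 'M[R]_(s, d)).
Hypothesis beta_ge0 : 0 <= beta.

Definition hres p q (X : 'M[R]_(p, d)) (Y : 'M[R]_(q, d)) : 'M[R]_(p, q) :=
  hmat beta X Y - hmat beta X L *m mpinv (hmat beta L L) *m hmat beta L Y.

Let mpinv_sym : (mpinv (hmat beta L L))^T = mpinv (hmat beta L L).
Proof. by rewrite trmx_mpinv_sym // tr_hmat. Qed.

Lemma tr_hres p q (X : 'M[R]_(p, d)) (Y : 'M[R]_(q, d)) : (hres X Y)^T = hres Y X.
Proof. by rewrite /hres linearB /= !trmx_mul !tr_hmat mpinv_sym mulmxA. Qed.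

Lemma row_hres p q (X : 'M[R]_(p, d)) (Y : 'M[R]_(q, d)) i :
  row i (hres X Y) = hres (row i X) Y.
Proof. by rewrite /hres linearB /= !row_mul !row_hmat. Qed.

Lemma hres_col_mx p1 p2 (X1 : 'M[R]_(p1, d)) (X2 : 'M[R]_(p2, d)) :
  hres (col_mx X1 X2) (col_mx X1 X2) =
  block_mx (hres X1 X1) (hres X1 X2) (hres X2 X1) (hres X2 X2).
Proof.
rewrite /hres hmat_col_mx hmat_col_mxl hmat_col_mxr mul_col_mx mul_col_row.
by rewrite opp_block_mx add_block_mx.
Qed.

Lemma psd_hres p (X : 'M[R]_(p, d)) : psdmx (hres X X).
Proof.
have := psd_hmat (col_mx L X) beta_ge0; rewrite hmat_col_mx -[hmat beta X L]tr_hmat.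
by move/(psd_schur_complement mpinv_sym (mpinv_mulmxK _)); rewrite tr_hmat.
Qed.

Lemma hres_diag_le (x : 'rV[R]_d) : hres x x 0 0 <= hmat beta x x 0 0.
Proof.
rewrite /hres [X in X <= _]mxE [X in _ + X]mxE gerBl -[hmat beta x L]tr_hmat.
move: (psd_hmat L beta_ge0) mpinv_sym (mpinv_mulmxK (hmat beta L L)).
move: (hmat beta L L) (mpinv (hmat beta L L)) (hmat beta L x) => G P h G_psd P_sym PGP.
by have := G_psd (P *m h); rewrite trmx_mul P_sym -!mulmxA (mulmxA P G) (mulmxA (P *m G)) PGP.
Qed.

Lemma hres_row_bound n (x : 'rV[R]_d) (K : 'M[R]_(n, d)) :
  \sum_j hres x K 0 j ^+ 2 <= expR (beta * \sum_k x 0 k ^+ 2) * specnorm (hres K K).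
Proof.
have := psd_hres (col_mx x K); rewrite hres_col_mx -[hres K x]tr_hres.
move=> /psd_block_row_bound /le_trans; apply; rewrite ler_wpM2r ?specnorm_ge0 //.
rewrite (le_trans (hres_diag_le x)) // mxE.
by under eq_bigr => k _ do rewrite -expr2.
Qed.

End NystromResidual.

Unset Implicit Arguments.

Theorem lemma2 (R : realType) (m n d r : nat) (Q : 'M[R]_(m, d))
  (K : 'M[R]_(n, d)) (beta : R) (hbeta : 0 < beta)
  (S : {set 'I_n}) (hS : #|S| = r) :
  let A := hmat beta Q K in
  let KS := subrows K S in
  let Ahat := hmat beta Q KS *m mpinv (hmat beta KS KS) *m hmat beta KS K in
  let hres := hmat beta K K - hmat beta K KS *m mpinv (hmat beta KS KS) *m hmat beta KS K in
  (\rank Ahat <= r)%N /\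
  norm2inf (A - Ahat) ^+ 2 <= expR (beta * norm2inf Q ^+ 2) * specnorm hres.
Proof.
move=> A KS Ahat res_KK; split.
  rewrite -hS (leq_trans (mxrankM_maxl _ _)) // (leq_trans (mxrankM_maxl _ _)) //.
  exact: rank_leq_col.
have beta_ge0 := ltW hbeta.
change (A - Ahat) with (hres beta KS Q K); change res_KK with (hres beta KS K K).
apply: norm2inf_sqr_le => [|i]; first by rewrite mulr_ge0 ?expR_ge0 ?specnorm_ge0.
have row_iE M : \sum_j (M : 'M[R]_(m, _)) i j ^+ 2 = \sum_j row i M 0 j ^+ 2.
  by apply: eq_bigr => j _; rewrite mxE.
rewrite row_iE row_hres (le_trans (hres_row_bound _ _ _ _)) //.
rewrite ler_wpM2r ?specnorm_ge0 // ler_expR ler_wpM2l // -row_iE.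
exact: sum_sqr_row_le_norm2inf.
Qed.
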